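(* Let $K\ge 2$, let $q=(q(1),\dots,q(K))$ be a label distribution and $p=(p(1),\dots,p(K))$ a model's predicted distribution on $\{1,\dots,K\}$, both with strictly positive entries, and let $\alpha\in[0,1]$. Define the self-guided soft label $q'=(1-\alpha)q+\alpha p$ and the loss $\ell_{sglr}=\mathcal{H}(q',p)$. Define the symmetric cross-entropy loss with weights summing to $1$, $\ell_{sce}=(1-\alpha)\,\mathcal{H}(q,p)+\alpha\,\mathcal{H}(p,q)$, and the reverse KL term $\ell_{rkl}=D_{\mathrm{KL}}(p\,\|\,q)$. Then $$\ell_{sglr}=\ell_{sce}-\alpha\,\ell_{rkl}.$$
   Context: $\mathcal{H}(a,b)=-\sum_{k=1}^K a(k)\log b(k)$ is the cross-entropy, $\mathcal{H}(a)=\mathcal{H}(a,a)$ the entropy, and $D_{\mathrm{KL}}(a\,\|\,b)=\sum_k a(k)\log\frac{a(k)}{b(k)}$. $\mathcal{H}(q,p)$ is the cross-entropy (CE) loss and $\mathcal{H}(p,q)$ the reverse cross-entropy (RCE) loss. *)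

From mathcomp Require Import all_boot all_order all_algebra.
From mathcomp Require Import all_classical all_reals all_analysis.
Set Implicit Arguments. Unset Strict Implicit. Unset Printing Implicit Defensive.
Import Order.TTheory GRing.Theory Num.Theory.
Local Open Scope ring_scope.

Definition pos_distr {R : realType} {K : nat} (a : 'I_K -> R) : Prop :=
  (forall k, 0 < a k) /\ \sum_(k < K) a k = 1.

Definition cross_entropy {R : realType} {K : nat} (a b : 'I_K -> R) : R :=
  - \sum_(k < K) a k * ln (b k).

Definition entropy {R : realType} {K : nat} (a : 'I_K -> R) : R :=
  cross_entropy a a.

Definition kl_div {R : realType} {K : nat} (a b : 'I_K -> R) : R :=
  \sum_(k < K) a k * ln (a k / b k).

(* Cross-entropy is linear in its first argument, so H(q', p) splits as
   (1 - alpha) H(q, p) + alpha H(p); the decomposition H(p, q) = H(p) + D_KL(p || q)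
   then trades H(p) for H(p, q) - D_KL(p || q). *)
From mathcomp Require Import all_boot all_order all_algebra.
From mathcomp Require Import all_classical all_reals all_analysis.
From mathcomp Require Import ring.
Set Implicit Arguments. Unset Strict Implicit. Unset Printing Implicit Defensive.
Import Order.TTheory GRing.Theory Num.Theory.
Local Open Scope ring_scope.

Lemma cross_entropy_combl {R : realType} {K : nat} (s t : R) (a a' b : 'I_K -> R) :
  cross_entropy (fun k => s * a k + t * a' k) b =
  s * cross_entropy a b + t * cross_entropy a' b.
Proof.
rewrite /cross_entropy !mulrN -opprD !mulr_sumr -big_split /=.
by congr (- _); apply: eq_bigr => k _; rewrite mulrDl !mulrA.
Qed.

Lemma cross_entropy_entropy_kl {R : realType} {K : nat} (a b : 'I_K -> R) :
  (forall k, 0 < a k) -> (forall k, 0 < b k) ->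
  cross_entropy a b = entropy a + kl_div a b.
Proof.
move=> a_gt0 b_gt0; rewrite /entropy /cross_entropy /kl_div -!sumrN -big_split /=.
by apply: eq_bigr => k _; rewrite ln_div ?posrE //; ring.
Qed.

Theorem proposition1 (R : realType) (K : nat) (hK : (2 <= K)%N)
    (q p : 'I_K -> R) (hq : pos_distr q) (hp : pos_distr p)
    (alpha : R) (ha0 : 0 <= alpha) (ha1 : alpha <= 1) :
  let q' := fun k => (1 - alpha) * q k + alpha * p k in
  let l_sglr := cross_entropy q' p in
  let l_sce := (1 - alpha) * cross_entropy q p + alpha * cross_entropy p q in
  let l_rkl := kl_div p q in
  l_sglr = l_sce - alpha * l_rkl.
Proof.
case: hq => q_gt0 _; case: hp => p_gt0 _ /=.
rewrite cross_entropy_combl (cross_entropy_entropy_kl p_gt0 q_gt0).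
by rewrite /entropy mulrDr addrA addrK.
Qed.
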